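(* In the setting of the context, let $(h_1,h_2)\in\mathbb C(s)^2$ satisfy $\widetilde\gamma_1h_1+\widetilde\gamma_2h_2+\omega=0$, $h_1^{\iota_1}=h_1$, $h_2^{\iota_2}=h_2$. If $P$ is a pole of $h_1$ distinct from $0$ and $\infty$, then there exist integers $m,n\ge0$ such that $\sigma^{-m}P\in\mathcal L_1^-$ and $\sigma^nP\in\mathcal L_1^+$. Likewise, if $P$ is a pole of $h_2$ distinct from $0$ and $\infty$, then there exist integers $m,n\ge0$ such that $\sigma^{-m}P\in\mathcal L_2^-$ and $\sigma^nP\in\mathcal L_2^+$.
   Context: For a genus-zero weighted quadrant walk model (step set one of the five genus-zero sets, step weights $d_{i,j}>0$, Boltzmann weights $a,b>0$), $A=1-1/a$, $B=1-1/b$, $\omega=1-A-B$. $s\mapsto(x(s),y(s))$ is a fixed rational parametrization by $\mathbb P^1$ of the kernel curve (for a fixed real $t$ transcendental over $\mathbb Q((d_{i,j}),a,b)$), with $x(1/s)=x(s)$, $y(q/s)=y(s)$ for a fixed real $q$ not a root of unity; $\iota_1(s)=1/s$, $\iota_2(s)=q/s$, $\sigma(s)=qs$, $h^\tau=h\circ\tau$. $\widetilde\gamma_1=A/x(s)-td_{1,-1}/y(s)$ and $\widetilde\gamma_2=B/y(s)-td_{-1,1}/x(s)$ have divisors $(\widetilde\gamma_1)=P_1+P_2-0-\infty$ and $(\widetilde\gamma_2)=P_3+P_4-0-\infty$ with $P_i\notin\{0,\infty\}$. Define $\mathcal L_1^-=\{P_1,P_2,\iota_2P_3,\iota_2P_4\}$,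 $\mathcal L_1^+=\{\iota_1P_1,\iota_1P_2,\sigma^{-1}P_3,\sigma^{-1}P_4\}$, $\mathcal L_2^-=\{\sigma P_1,\sigma P_2,\iota_2P_3,\iota_2P_4\}$, $\mathcal L_2^+=\{\iota_1P_1,\iota_1P_2,P_3,P_4\}$. *)

(* Rational functions C(s) are modelled as the fraction
   field {fraction {poly C}} of C[s], with C = R[i] for a real closed field R. *)
From HB Require Import structures.
From mathcomp Require Import all_boot all_order all_algebra.
From mathcomp Require Import generic_quotient fraction complex.
From mathcomp Require Import mpoly.

Set Implicit Arguments.
Unset Strict Implicit.
Unset Printing Implicit Defensive.

Import Order.TTheory GRing.Theory Num.Theory.
Local Open Scope ring_scope.

Notation "x %:F" := (@FracField.tofrac _ x) : ring_scope.

Section RatFun.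
Variable F : fieldType.
Local Notation RF := {fraction {poly F}}.

Definition fX : RF := ('X)%:F.
Definition fC (c : F) : RF := (c%:P)%:F.

Definition peval_frac (p : {poly F}) (u : RF) : RF :=
  (map_poly fC p).[u].

(* composition h o u  (h^u in the paper's notation h^tau = h o tau),
   computed on a representative numerator/denominator pair of h *)
Definition fcomp (h u : RF) : RF :=
  let r := repr h in peval_frac \n_r u / peval_frac \d_r u.

Definition iota1 : RF := fX^-1.
Definition iota2 (q : F) : RF := fC q / fX.
Definition sigma (q : F) : RF := fC q * fX.

Definition fpole (h : RF) (P : F) : Prop :=
  ~ exists a b : {poly F}, b.[P] != 0 /\ h = a%:F / b%:F.

Definition ford (c : F) (h : RF) : int :=
  (mup c \n_(repr h))%:Z - (mup c \d_(repr h))%:Z.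
Definition ford_inf (h : RF) : int :=
  (size \d_(repr h))%:Z - (size \n_(repr h))%:Z.

Definition divisor_is_2zeros (h : RF) (Q1 Q2 : F) : Prop :=
  [/\ h != 0,
      forall c : F, ford c h = (c == Q1)%:Z + (c == Q2)%:Z - (c == 0)%:Z
    & ford_inf h = - 1].

(* evaluation of a bivariate polynomial P(X,Y) (inner variable X) at (u,v) *)
Definition peval2_frac (P : {poly {poly F}}) (u v : RF) : RF :=
  (map_poly (fun p => peval_frac p u) P).[v].

End RatFun.

Section Model.
Variable R : rcfType.
Local Notation C := R[i].
Local Notation RF := {fraction {poly C}}.

Definition rc (r : R) : C := (r%:C)%C.

(* step weights: d i j is the weight d_{i-1,j-1} of the step (i-1,j-1) *)
(* kernel  xy (1 - t sum d_{i,j} x^i y^j) = xy - t sum d_{i,j} x^{i+1} y^{j+1},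
   evaluated at rational functions X, Y *)
Definition kernel_eval (d : 'I_3 -> 'I_3 -> R) (t : R) (X Y : RF) : RF :=
  X * Y - fC (rc t) *
    \sum_(i < 3) \sum_(j < 3) fC (rc (d i j)) * X ^+ i * Y ^+ j.

Definition params (d : 'I_3 -> 'I_3 -> R) (a b : R) : 'I_11 -> C :=
  fun k => if (k < 9)%N then rc (d (inord (k %/ 3)) (inord (k %% 3)))
           else if k == 9 :> nat then rc a else rc b.

(* t is transcendental over Q(params): it is not a root of any polynomial
   with coefficients in Q[params] which is nonzero after evaluation *)
Definition transcendental_over (n : nat) (v : 'I_n -> C) (t : C) : Prop :=
  forall p : {poly {mpoly rat[n]}},
    let p' := map_poly (mmap ratr v) p in p' != 0 -> ~~ root p' t.

Definition Acoef (a : R) : R := 1 - a^-1.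
Definition Bcoef (b : R) : R := 1 - b^-1.
Definition omega (a b : R) : R := 1 - Acoef a - Bcoef b.

Definition gamma1 (d : 'I_3 -> 'I_3 -> R) (a t : R) (x y : RF) : RF :=
  fC (rc (Acoef a)) / x - fC (rc (t * d 2 0)) / y.
Definition gamma2 (d : 'I_3 -> 'I_3 -> R) (b t : R) (x y : RF) : RF :=
  fC (rc (Bcoef b)) / y - fC (rc (t * d 0 2)) / x.

Definition L1m (q : R) (P1 P2 P3 P4 : C) : seq C :=
  [:: P1; P2; rc q / P3; rc q / P4].
Definition L1p (q : R) (P1 P2 P3 P4 : C) : seq C :=
  [:: P1^-1; P2^-1; P3 / rc q; P4 / rc q].
Definition L2m (q : R) (P1 P2 P3 P4 : C) : seq C :=
  [:: rc q * P1; rc q * P2; rc q / P3; rc q / P4].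
Definition L2p (q : R) (P1 P2 P3 P4 : C) : seq C :=
  [:: P1^-1; P2^-1; P3; P4].

End Model.

(* Poles travel along the q-spiral.  Away from 0 and from the zeros P1, P2 of
   gamma~_1, the relation gamma~_1 h1 = - (gamma~_2 h2 + omega) turns a pole of
   h1 into a pole of h2 (gamma~_2 is regular there), and symmetrically for h2
   away from P3, P4.  The symmetries h1 = h1(1/s) and h2 = h2(q/s) move poles to
   1/P and q/P, so chaining the four moves sends a pole P of h1 either into
   L_1^- or to the pole P/q, and either into L_1^+ or to the pole qP; likewise for
   h2.  As q is not a root of unity the points q^k P are pairwise distinct,
   whereas a rational function has finitely many poles, so each chain stops in
   the corresponding set. *)

From HB Require Import structures.
From mathcomp Require Import all_boot all_order all_algebra.
From mathcomp Require Import generic_quotient fraction complex.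
From mathcomp Require Import mpoly.
From mathcomp Require Import ring.

Import Order.TTheory GRing.Theory Num.Theory.
Local Open Scope ring_scope.

Set Implicit Arguments.
Unset Strict Implicit.
Unset Printing Implicit Defensive.

(* Stated over an abstract field: [field] is impractically slow on [{fraction {poly F}}]. *)
Lemma exprS_mul_div_addr (K : fieldType) (x c y q : K) (k : nat) : x != 0 ->
  x ^+ k.+1 * (q * (c / x) + y) = c * (x ^+ k * q) + y * x ^+ k.+1.
Proof. by move=> x0; rewrite exprSr; field. Qed.

Section RationalFunctions.
Variable F : fieldType.
Local Notation RF := {fraction {poly F}}.

Lemma tofrac_reprE (h : RF) : h = (\n_(repr h))%:F / (\d_(repr h))%:F.
Proof.
have dF : (\d_(repr h))%:F != 0 :> RF by rewrite tofrac_eq0 denom_ratioP.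
apply: (mulIf dF); rewrite mulfVK // -{1}[h]reprK.
unlock FracField.tofrac; rewrite /= !piE; apply/eqmodP.
rewrite /= FracField.equivfE /FracField.mulf.
by rewrite !numden_Ratio ?mulr1 ?oner_neq0 ?denom_ratioP // mulrC.
Qed.

Definition fregular (h : RF) (P : F) : Prop :=
  exists a b : {poly F}, b.[P] != 0 /\ h = a%:F / b%:F.

Lemma tofrac_neq0_horner (b : {poly F}) (P : F) : b.[P] != 0 -> b%:F != 0 :> RF.
Proof. by rewrite tofrac_eq0; apply: contraNneq => ->; rewrite horner0. Qed.

Lemma fregular_tofrac (p : {poly F}) P : fregular p%:F P.
Proof. by exists p, 1; rewrite hornerC oner_neq0 tofrac1 divr1. Qed.

Lemma fregularD f g P : fregular f P -> fregular g P -> fregular (f + g) P.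
Proof.
move=> [a1 [b1 [b1P ->]]] [a2 [b2 [b2P ->]]].
have b1F := tofrac_neq0_horner b1P; have b2F := tofrac_neq0_horner b2P.
exists (a1 * b2 + a2 * b1), (b1 * b2); split; first by rewrite hornerM mulf_neq0.
by rewrite (addf_div _ _ b1F b2F) tofracD !tofracM.
Qed.

Lemma fregularM f g P : fregular f P -> fregular g P -> fregular (f * g) P.
Proof.
move=> [a1 [b1 [b1P ->]]] [a2 [b2 [b2P ->]]].
exists (a1 * a2), (b1 * b2); split; first by rewrite hornerM mulf_neq0.
by rewrite mulf_div !tofracM.
Qed.

Lemma fregularN f P : fregular f P -> fregular (- f) P.
Proof. by move=> [a [b [bP ->]]]; exists (- a), b; rewrite tofracN mulNr. Qed.

Lemma fpole_root_denom (h : RF) (P : F) : fpole h P -> root (\d_(repr h)) P.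
Proof.
by move=> hP; apply/negPn/negP => dP; apply: hP; exists \n_(repr h), \d_(repr h);
  split; last exact: tofrac_reprE.
Qed.

Lemma ford_factor (h : RF) (P : F) : h != 0 ->
  exists (n d : {poly F}) (k l : nat),
    [/\ n.[P] != 0, d.[P] != 0, ford P h = k%:Z - l%:Z &
        h = (n * ('X - P%:P) ^+ k)%:F / (d * ('X - P%:P) ^+ l)%:F].
Proof.
move=> h0; have hE := tofrac_reprE h.
have d0 : \d_(repr h) != 0 by exact: denom_ratioP.
have n0 : \n_(repr h) != 0.
  by apply: contraNneq h0 => n0; rewrite hE n0 tofrac0 mul0r.
have [k [n nP nE]] := multiplicity_XsubC \n_(repr h) P.
have [l [d dP dE]] := multiplicity_XsubC \d_(repr h) P.
rewrite n0 in nP; rewrite d0 in dP.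
exists n, d, k, l; split; [exact: nP | exact: dP | | by rewrite hE -nE -dE].
by rewrite /ford nE dE (mupMr _ nP) (mupMr _ dP) !mup_XsubCX eqxx.
Qed.

Lemma ford_ge0_fregular (h : RF) (P : F) : h != 0 -> 0 <= ford P h -> fregular h P.
Proof.
move=> /(ford_factor P) [n [d [k [l [_ dP -> ->]]]]].
rewrite subr_ge0 lez_nat => lk.
exists (n * ('X - P%:P) ^+ (k - l)), d; split; first exact: dP.
have Xl0 : (('X - P%:P) ^+ l)%:F != 0 :> RF.
  by rewrite tofrac_eq0 expf_neq0 // polyXsubC_eq0.
by rewrite -(subnK lk) exprD mulrA !tofracM -mulf_div divff // mulr1 addnK.
Qed.

Lemma ford_eq0_fregularV (h : RF) (P : F) : h != 0 -> ford P h = 0 -> fregular h^-1 P.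
Proof.
move=> /(ford_factor P) [n [d [k [l [nP dP -> ->]]]]] /eqP.
rewrite subr_eq0 => /eqP [<-].
have Xk0 : (('X - P%:P) ^+ k)%:F != 0 :> RF.
  by rewrite tofrac_eq0 expf_neq0 // polyXsubC_eq0.
exists d, n; split; first exact: nP.
by rewrite !tofracM -mulf_div (divff Xk0) mulr1 invf_div.
Qed.

(* [fC] is not syntactically a composite of ring morphisms; this form is, so the
   [rmorph*] lemmas apply. *)
Lemma peval_fracE (p : {poly F}) (u : RF) :
  peval_frac p u = (map_poly (@FracField.tofrac _ \o polyC) p).[u].
Proof. by []. Qed.

Lemma peval_frac0 (u : RF) : peval_frac 0 u = 0.
Proof. by rewrite peval_fracE rmorph0 horner0. Qed.

Lemma peval_fracM (p r : {poly F}) (u : RF) :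
  peval_frac (p * r) u = peval_frac p u * peval_frac r u.
Proof. by rewrite !peval_fracE rmorphM hornerM. Qed.

Lemma peval_frac_MXaddC (p : {poly F}) (a : F) (u : RF) :
  peval_frac (p * 'X + a%:P) u = peval_frac p u * u + fC a.
Proof. by rewrite !peval_fracE rmorphD rmorphM /= map_polyX map_polyC hornerMXaddC. Qed.

Lemma fX_neq0 : fX F != 0.
Proof. by rewrite tofrac_eq0 polyX_eq0. Qed.

Lemma peval_frac_inv_scale (c : F) (p : {poly F}) : exists m, forall k, (m <= k)%N ->
  exists r : {poly F}, r%:F = fX F ^+ k * peval_frac p (fC c / fX F) /\
                       forall z, z != 0 -> r.[z] = z ^+ k * p.[c / z].
Proof.
elim/poly_ind: p => [|p a [m IHp]].
  by exists 0%N => k _; exists 0; rewrite peval_frac0 tofrac0 mulr0; split=> // z _;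
    rewrite !horner0 mulr0.
exists m.+1 => -[//|k] /IHp [r [rE rz]].
exists (c%:P * r + a%:P * 'X ^+ k.+1); split.
  by rewrite peval_frac_MXaddC exprS_mul_div_addr ?fX_neq0 // tofracD !tofracM tofracXn rE.
move=> z z0; rewrite hornerD !hornerM !hornerC hornerXn rz // hornerMXaddC.
by rewrite exprSr; field.
Qed.

Lemma fcomp_tofrac_div (h u : RF) (a b : {poly F}) :
  h = a%:F / b%:F -> peval_frac b u != 0 -> fcomp h u != 0 ->
  fcomp h u = peval_frac a u / peval_frac b u.
Proof.
move=> hab bu0 hu0.
have b0 : b != 0 by apply: contraNneq bu0 => ->; rewrite peval_frac0.
have d0 := denom_ratioP (repr h).
have du0 : peval_frac \d_(repr h) u != 0.
  by apply: contraNneq hu0 => du0; rewrite /fcomp du0 invr0 mulr0.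
have nb_ad : \n_(repr h) * b = a * \d_(repr h).
  apply/eqP; rewrite -tofrac_eq !tofracM -eqr_div ?tofrac_eq0 //.
  by rewrite -tofrac_reprE hab.
apply/eqP; rewrite /fcomp (eqr_div _ _ du0 bu0) -!peval_fracM nb_ad; exact: eqxx.
Qed.

Lemma fpole_fcomp_inv_scale (c : F) (h : RF) (P : F) :
  fcomp h (fC c / fX F) = h -> P != 0 -> fpole h P -> fpole h (c / P).
Proof.
move=> hc P0 hP [a [b [bP hab]]]; apply: hP.
have [->|h0] := eqVneq h 0; first by rewrite -tofrac0; exact: fregular_tofrac.
set u := fC c / fX F in hc.
have [[ma Ra] [mb Rb]] := (peval_frac_inv_scale c a, peval_frac_inv_scale c b).
have [ra [raE _]] := Ra (maxn ma mb) (leq_maxl _ _).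
have [rb [rbE rbz]] := Rb (maxn ma mb) (leq_maxr _ _).
have rbP : rb.[P] != 0 by rewrite rbz // mulf_neq0 // expf_neq0.
have Xk0 : fX F ^+ maxn ma mb != 0 := expf_neq0 _ fX_neq0.
have bu0 : peval_frac b u != 0.
  by apply: contraNneq (tofrac_neq0_horner rbP) => bu0; rewrite rbE bu0 mulr0 eqxx.
have hu0 : fcomp h u != 0 by rewrite hc; exact: h0.
exists ra, rb; split; first exact: rbP.
by rewrite -{1}hc (fcomp_tofrac_div hab bu0 hu0) raE rbE -mulf_div (divff Xk0) mul1r.
Qed.

Lemma divisor_is_2zeros_fregular (g : RF) (Q1 Q2 P : F) :
  divisor_is_2zeros g Q1 Q2 -> P != 0 -> fregular g P.
Proof.
case=> g0 ord_g _ P0; apply: ford_ge0_fregular g0 _.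
by rewrite ord_g (negbTE P0) subr0 addr_ge0.
Qed.

Lemma divisor_is_2zeros_fregularV (g : RF) (Q1 Q2 P : F) :
  divisor_is_2zeros g Q1 Q2 -> P != 0 -> P != Q1 -> P != Q2 -> fregular g^-1 P.
Proof.
case=> g0 ord_g _ P0 PQ1 PQ2; apply: ford_eq0_fregularV g0 _.
by rewrite ord_g (negbTE P0) (negbTE PQ1) (negbTE PQ2).
Qed.

(* [h1 = - g1^-1 (g2 h2 + w)], and [g1^-1] is regular away from [0], [Q1], [Q2]. *)
Lemma fpole_transfer (g1 g2 h1 h2 : RF) (w Q1 Q2 Q3 Q4 P : F) :
  divisor_is_2zeros g1 Q1 Q2 -> divisor_is_2zeros g2 Q3 Q4 ->
  g1 * h1 + g2 * h2 + fC w = 0 -> P != 0 -> fpole h1 P ->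
  [\/ P = Q1, P = Q2 | fpole h2 P].
Proof.
move=> g1_div g2_div lin P0 h1P.
have [->|PQ1] := eqVneq P Q1; first exact: Or31.
have [->|PQ2] := eqVneq P Q2; first exact: Or32.
apply: Or33 => h2_reg; apply: h1P.
have g1_0 : g1 != 0 by case: g1_div.
have g1h1 : g1 * h1 = - (g2 * h2 + fC w).
  by apply/eqP; rewrite -addr_eq0 addrA lin eqxx.
rewrite (canRL (mulKf g1_0) g1h1).
apply: fregularM; first exact: divisor_is_2zeros_fregularV g1_div P0 PQ1 PQ2.
apply/fregularN/fregularD; last exact: fregular_tofrac.
exact: fregularM (divisor_is_2zeros_fregular g2_div P0) h2_reg.
Qed.

End RationalFunctions.

Lemma injective_seq_exits_roots (R : idomainType) (g : nat -> R) (inside L : R -> Prop)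
    (p : {poly R}) :
  p != 0 -> (forall z, inside z -> root p z) -> injective g ->
  (forall k, inside (g k) -> L (g k) \/ inside (g k.+1)) -> inside (g 0) ->
  exists m, L (g m).
Proof.
move=> p0 inside_root g_inj step inside0.
suff [//|inside_all] : (exists m, L (g m)) \/ forall j, (j <= size p)%N -> inside (g j).
  have roots_g : all (root p) (mkseq g (size p).+1).
    apply/allP => z /mapP [j]; rewrite mem_iota add0n ltnS => /andP [_ jp] ->.
    exact/inside_root/inside_all.
  by have := max_poly_roots p0 roots_g (mkseq_uniq _ g_inj); rewrite size_mkseq ltnNge leqnSn.
elim: (size p) => [|n [Lm|IH]]; [by right=> j; rewrite leqn0 => /eqP -> | by left | ].
have [Ln|inside_n1] := step n (IH n (leqnn n)); first by left; exists n.
by right=> j; rewrite leq_eqVlt ltnS => /predU1P [->|/IH].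
Qed.

Lemma expr_inj_not_unity_root (R : idomainType) (c : R) :
  c != 0 -> (forall n, (0 < n)%N -> c ^+ n != 1) -> injective (fun k => c ^+ k).
Proof.
move=> c0 c_not_unity.
suff le_inj i j : (i <= j)%N -> c ^+ i = c ^+ j -> i = j.
  move=> i j /= cij; have [/le_inj|/ltnW/le_inj] := leqP i j; first exact.
  by move=> /(_ (esym cij)).
move=> le_ij; rewrite -(subnK le_ij) exprD -{1}[c ^+ i]mul1r.
move=> /(mulIf (expf_neq0 i c0)) /esym; case: (j - i)%N => [_|k ck]; first by rewrite add0n.
by have := c_not_unity k.+1 isT; rewrite ck eqxx.
Qed.

Section PoleOrbit.
Variables (F : fieldType) (c : F).
Hypotheses (c0 : c != 0) (c_not_unity : forall n, (0 < n)%N -> c ^+ n != 1).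
Local Notation RF := {fraction {poly F}}.

Lemma fpole_orbit_down (h : RF) (L : seq F) :
  (forall Q, Q != 0 -> fpole h Q -> Q \in L \/ fpole h (Q / c)) ->
  forall P, P != 0 -> fpole h P -> exists m, c ^- m * P \in L.
Proof.
move=> step P P0 hP.
have cP0 m : c ^- m * P != 0 by rewrite mulf_neq0 // invr_eq0 expf_neq0.
apply: (@injective_seq_exits_roots _ (fun m => c ^- m * P) (fpole h) (fun z => z \in L)
  \d_(repr h)).
- exact: denom_ratioP.
- by move=> z /fpole_root_denom.
- by move=> i j /= /(mulIf P0) /invr_inj /(expr_inj_not_unity_root c0 c_not_unity).
- by move=> k /(step _ (cP0 k)); rewrite exprSr invfM mulrAC.
- by rewrite expr0 invr1 mul1r.
Qed.

Lemma fpole_orbit_up (h : RF) (L : seq F) :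
  (forall Q, Q != 0 -> fpole h Q -> Q \in L \/ fpole h (c * Q)) ->
  forall P, P != 0 -> fpole h P -> exists n, c ^+ n * P \in L.
Proof.
move=> step P P0 hP.
have cP0 n : c ^+ n * P != 0 by rewrite mulf_neq0 // expf_neq0.
apply: (@injective_seq_exits_roots _ (fun n => c ^+ n * P) (fpole h) (fun z => z \in L)
  \d_(repr h)).
- exact: denom_ratioP.
- by move=> z /fpole_root_denom.
- by move=> i j /= /(mulIf P0) /(expr_inj_not_unity_root c0 c_not_unity).
- by move=> k /(step _ (cP0 k)); rewrite exprS mulrA.
- by rewrite expr0 mul1r.
Qed.

End PoleOrbit.

Section PolePropagation.
Variable F : fieldType.
Local Notation RF := {fraction {poly F}}.

Variables (g1 g2 h1 h2 : RF) (w c P1 P2 P3 P4 : F).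
Hypotheses (g1_div : divisor_is_2zeros g1 P1 P2) (g2_div : divisor_is_2zeros g2 P3 P4).
Hypothesis lin : g1 * h1 + g2 * h2 + fC w = 0.
Hypotheses (h1_iota1 : fcomp h1 (iota1 F) = h1) (h2_iota2 : fcomp h2 (iota2 c) = h2).
Hypothesis c0 : c != 0.

Lemma fpole1_iota1 Q : Q != 0 -> fpole h1 Q -> fpole h1 Q^-1.
Proof.
have h1_inv : fcomp h1 (fC 1 / fX F) = h1.
  by rewrite /fC polyC1 tofrac1 div1r; exact: h1_iota1.
by move=> Q0 /(fpole_fcomp_inv_scale h1_inv Q0); rewrite div1r.
Qed.

Lemma fpole2_iota2 Q : Q != 0 -> fpole h2 Q -> fpole h2 (c / Q).
Proof. exact: fpole_fcomp_inv_scale h2_iota2. Qed.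

Lemma fpole1_cases Q : Q != 0 -> fpole h1 Q -> [\/ Q = P1, Q = P2 | fpole h2 Q].
Proof. exact: fpole_transfer g1_div g2_div lin. Qed.

Lemma fpole2_cases Q : Q != 0 -> fpole h2 Q -> [\/ Q = P3, Q = P4 | fpole h1 Q].
Proof.
have lin' : g2 * h2 + g1 * h1 + fC w = 0 by rewrite (addrC (g2 * h2)); exact: lin.
exact: fpole_transfer g2_div g1_div lin'.
Qed.

Lemma fpole1_step_down Q : Q != 0 -> fpole h1 Q ->
  Q \in [:: P1; P2; c / P3; c / P4] \/ fpole h1 (Q / c).
Proof.
move=> Q0 /(fpole1_cases Q0) [->|->|/(fpole2_iota2 Q0)].
- by left; rewrite !inE eqxx.
- by left; rewrite !inE eqxx orbT.
have cQ0 : c / Q != 0 by rewrite mulf_neq0 ?invr_eq0.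
case/(fpole2_cases cQ0) => [e|e|/(fpole1_iota1 cQ0)]; last by rewrite invf_div; right.
all: by left; rewrite -[Q](divKf c0) e !inE eqxx !orbT.
Qed.

Lemma fpole1_step_up Q : Q != 0 -> fpole h1 Q ->
  Q \in [:: P1^-1; P2^-1; P3 / c; P4 / c] \/ fpole h1 (c * Q).
Proof.
move=> Q0 /(fpole1_iota1 Q0); have Qi0 : Q^-1 != 0 by rewrite invr_eq0.
case/(fpole1_cases Qi0) => [e|e|/(fpole2_iota2 Qi0)].
- by left; rewrite -[Q]invrK e !inE eqxx.
- by left; rewrite -[Q]invrK e !inE eqxx orbT.
rewrite invrK; have cQ0 : c * Q != 0 by rewrite mulf_neq0.
case/(fpole2_cases cQ0) => [e|e|]; last by right.
all: by left; rewrite -e [c * Q]mulrC (mulfK c0) !inE eqxx !orbT.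
Qed.

Lemma fpole2_step_down Q : Q != 0 -> fpole h2 Q ->
  Q \in [:: c * P1; c * P2; c / P3; c / P4] \/ fpole h2 (Q / c).
Proof.
move=> Q0 /(fpole2_iota2 Q0); have cQ0 : c / Q != 0 by rewrite mulf_neq0 ?invr_eq0.
case/(fpole2_cases cQ0) => [e|e|/(fpole1_iota1 cQ0)].
- by left; rewrite -[Q](divKf c0) e !inE eqxx !orbT.
- by left; rewrite -[Q](divKf c0) e !inE eqxx !orbT.
rewrite invf_div; have Qc0 : Q / c != 0 by rewrite mulf_neq0 ?invr_eq0.
case/(fpole1_cases Qc0) => [e|e|]; last by right.
all: by left; rewrite -e [c * (Q / c)]mulrC (divfK c0) !inE eqxx ?orbT.
Qed.

Lemma fpole2_step_up Q : Q != 0 -> fpole h2 Q ->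
  Q \in [:: P1^-1; P2^-1; P3; P4] \/ fpole h2 (c * Q).
Proof.
move=> Q0 /(fpole2_cases Q0) [->|->|/(fpole1_iota1 Q0)].
- by left; rewrite !inE eqxx !orbT.
- by left; rewrite !inE eqxx !orbT.
have Qi0 : Q^-1 != 0 by rewrite invr_eq0.
case/(fpole1_cases Qi0) => [e|e|/(fpole2_iota2 Qi0)]; last by rewrite invrK; right.
all: by left; rewrite -[Q]invrK e !inE eqxx ?orbT.
Qed.

End PolePropagation.

Theorem lemma3p7 (R : rcfType) (S : {set 'I_3 * 'I_3})
  (d : 'I_3 -> 'I_3 -> R) (a b t q : R)
  (x y : {fraction {poly R[i]}}) (P1 P2 P3 P4 : R[i])
  (h1 h2 : {fraction {poly R[i]}}) :
  (* weighted small-step model: step set S, weights d_{i,j} > 0 on S *)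
  ((1 : 'I_3), (1 : 'I_3)) \notin S ->
  (forall i j, (i, j) \in S -> 0 < d i j) ->
  (forall i j, (i, j) \notin S -> d i j = 0) ->
  (* Boltzmann weights *)
  0 < a -> 0 < b ->
  (* t real, transcendental over Q((d_{i,j}), a, b) *)
  transcendental_over (params d a b) (rc t) ->
  (* q real, not a root of unity (and nonzero, so that s |-> q/s is defined) *)
  q != 0 -> (forall n : nat, (0 < n)%N -> q ^+ n != 1) ->
  (* s |-> (x(s), y(s)) is a rational parametrization by P^1 of the kernel curve *)
  kernel_eval d t x y = 0 ->
  (exists N D : {poly {poly R[i]}},
      peval2_frac D x y != 0 /\ peval2_frac N x y = fX _ * peval2_frac D x y) ->
  fcomp x (iota1 _) = x ->
  fcomp y (iota2 (rc q)) = y ->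
  (* divisors of gamma~_1 and gamma~_2 *)
  divisor_is_2zeros (gamma1 d a t x y) P1 P2 ->
  divisor_is_2zeros (gamma2 d b t x y) P3 P4 ->
  P1 != 0 -> P2 != 0 -> P3 != 0 -> P4 != 0 ->
  (* the pair (h1, h2) *)
  gamma1 d a t x y * h1 + gamma2 d b t x y * h2 + fC (rc (omega a b)) = 0 ->
  fcomp h1 (iota1 _) = h1 ->
  fcomp h2 (iota2 (rc q)) = h2 ->
  (forall P : R[i], P != 0 -> fpole h1 P ->
     exists m n : nat,
       (rc q) ^- m * P \in L1m q P1 P2 P3 P4 /\ (rc q) ^+ n * P \in L1p q P1 P2 P3 P4)
  /\
  (forall P : R[i], P != 0 -> fpole h2 P ->
     exists m n : nat,
       (rc q) ^- m * P \in L2m q P1 P2 P3 P4 /\ (rc q) ^+ n * P \in L2p q P1 P2 P3 P4).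
Proof.
move=> _ _ _ _ _ _ q0 q_not_unity _ _ _ _ g1_div g2_div _ _ _ _ lin h1_iota1 h2_iota2.
have rq0 : rc q != 0 by rewrite /rc fmorph_eq0.
have rq_not_unity n : (0 < n)%N -> rc q ^+ n != 1.
  by rewrite /rc -rmorphXn fmorph_eq1; exact: q_not_unity.
have down := fpole_orbit_down rq0 rq_not_unity.
have up := fpole_orbit_up rq0 rq_not_unity.
split=> P P0 hP.
- have [m Pm] := down _ _ (fpole1_step_down g1_div g2_div lin h1_iota1 h2_iota2 rq0) _ P0 hP.
  have [n Pn] := up _ _ (fpole1_step_up g1_div g2_div lin h1_iota1 h2_iota2 rq0) _ P0 hP.
  by exists m, n.
- have [m Pm] := down _ _ (fpole2_step_down g1_div g2_div lin h1_iota1 h2_iota2 rq0) _ P0 hP.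
  have [n Pn] := up _ _ (fpole2_step_up g1_div g2_div lin h1_iota1 h2_iota2) _ P0 hP.
  by exists m, n.
Qed.
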